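(* Let $\mathcal{C}$ be a category with a faithful functor $Q:\mathcal{C}\to\mathbf{Set}$ for which there exist an object $A_0$ and an element $x_0\in Q(A_0)$ satisfying (1Q) and (2Q) below. Then every automorphism of $\mathcal{C}$ is potentially quasi-inner.
   Context: (1Q): for every object $A$ of $\mathcal{C}$ and every $a\in Q(A)$ there is exactly one morphism $\alpha:A_0\to A$ with $Q(\alpha)(x_0)=a$. (2Q): for every object $A$ there is a morphism $\alpha:A\to A_0$ such that $Q(\alpha)$ is surjective. For objects $A,B$, a map $s:Q(A)\to Q(B)$ is a $\mathcal{C}$-bijection if $s$ is injective and for any two morphisms $\alpha_1,\alpha_2:B\to C$ of $\mathcal{C}$, $Q(\alpha_1)\circ s=Q(\alpha_2)\circ s$ implies $\alpha_1=\alpha_2$. An automorphism $\Phi$ of $\mathcal{C}$ is potentially quasi-inner if there exists a family of $\mathcal{C}$-bijections $s_A:Q(A)\to Q(\Phi(A))$, $A\in\mathrm{Ob}\,\mathcal{C}$, such that $Q(\Phi(\mu))\circ s_A=s_B\circ Q(\mu)$ for every morphism $\mu:A\to B$. *)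

Record Category := {
  Ob :> Type;
  Hom : Ob -> Ob -> Type;
  idm : forall A : Ob, Hom A A;
  comp : forall A B C : Ob, Hom B C -> Hom A B -> Hom A C;
  comp_id_l : forall A B (f : Hom A B), comp A B B (idm B) f = f;
  comp_id_r : forall A B (f : Hom A B), comp A A B f (idm A) = f;
  comp_assoc : forall A B C D (h : Hom C D) (g : Hom B C) (f : Hom A B),
      comp A C D h (comp A B C g f) = comp A B D (comp B C D h g) f
}.

Arguments Hom {c} A B.
Arguments idm {c} A.
Arguments comp {c} {A B C} g f.

Record SetFunctor (C : Category) := {
  Fob :> C -> Type;
  Fmap : forall (A B : C), Hom A B -> Fob A -> Fob B;
  Fmap_id : forall (A : C) (x : Fob A), Fmap A A (idm A) x = x;
  Fmap_comp : forall (A B D : C) (g : Hom B D) (f : Hom A B) (x : Fob A),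
      Fmap A D (comp g f) x = Fmap B D g (Fmap A B f x)
}.

Arguments Fob {C} s _.
Arguments Fmap {C} s {A B} _ _.

Definition faithful {C : Category} (Q : SetFunctor C) : Prop :=
  forall (A B : C) (f g : Hom A B),
    (forall x, Fmap Q f x = Fmap Q g x) -> f = g.

Record Endofunctor (C : Category) := {
  Eob :> C -> C;
  Emap : forall (A B : C), Hom A B -> Hom (Eob A) (Eob B);
  Emap_id : forall (A : C), Emap A A (idm A) = idm (Eob A);
  Emap_comp : forall (A B D : C) (g : Hom B D) (f : Hom A B),
      Emap A D (comp g f) = comp (Emap B D g) (Emap A B f)
}.

Arguments Eob {C} e _ : rename.
Arguments Emap {C} e {A B} _ : rename.

(* Composite G o F is the identity functor, with equality of morphisms
   taken in the total space of all morphisms (to handle the dependency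
   of hom-types on the objects). *)
Definition inverse_left {C : Category} (G F : Endofunctor C) : Prop :=
  (forall A : C, Eob G (Eob F A) = A) /\
  (forall (A B : C) (f : Hom A B),
     existT (fun p : C * C => Hom (fst p) (snd p))
            (Eob G (Eob F A), Eob G (Eob F B)) (Emap G (Emap F f))
     = existT (fun p : C * C => Hom (fst p) (snd p)) (A, B) f).

Definition automorphism {C : Category} (F : Endofunctor C) : Prop :=
  exists G : Endofunctor C, inverse_left G F /\ inverse_left F G.

Definition cond1Q {C : Category} (Q : SetFunctor C) (A0 : C) (x0 : Q A0) : Prop :=
  forall (A : C) (a : Q A),
    exists alpha : Hom A0 A, Fmap Q alpha x0 = a /\
      forall beta : Hom A0 A, Fmap Q beta x0 = a -> beta = alpha.

Definition cond2Q {C : Category} (Q : SetFunctor C) (A0 : C) : Prop :=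
  forall A : C, exists alpha : Hom A A0,
    forall y : Q A0, exists x : Q A, Fmap Q alpha x = y.

Definition C_bijection {C : Category} (Q : SetFunctor C) (A B : C)
    (s : Q A -> Q B) : Prop :=
  (forall x y, s x = s y -> x = y) /\
  (forall (D : C) (a1 a2 : Hom B D),
     (forall x, Fmap Q a1 (s x) = Fmap Q a2 (s x)) -> a1 = a2).

Definition potentially_quasi_inner {C : Category} (Q : SetFunctor C)
    (Phi : Endofunctor C) : Prop :=
  exists s : forall A : C, Q A -> Q (Eob Phi A),
    (forall A : C, C_bijection Q A (Eob Phi A) (s A)) /\
    (forall (A B : C) (mu : Hom A B) (x : Q A),
       Fmap Q (Emap Phi mu) (s A x) = s B (Fmap Q mu x)).

(* By (1Q), every a in Q(A) is Q(rep a)(x0) for a unique rep a : A0 -> A,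
   and rep is natural: rep (Q(mu) a) = mu o rep a.  By (2Q) pick
   gam : B -> A0 with Q(gam) surjective, where B = Phi^-1(A0); gam is epic
   because Q is faithful, and x0 seen in Q(Phi B) = Q(A0) separates
   morphisms out of Phi B.  Then s_A(a) = Q(Phi(rep a o gam))(x0) is natural
   by naturality of rep, injective because Phi is faithful and gam epic, and
   a C-bijection because the family (rep a o gam)_a is jointly epic (Q is
   faithful) and the automorphism Phi preserves jointly epic families. *)

From Stdlib Require Import ClassicalEpsilon Eqdep.

Section Epimorphisms.

Context {C : Category}.

Definition epic {X Y : C} (e : Hom X Y) : Prop :=
  forall (Z : C) (f g : Hom Y Z), comp f e = comp g e -> f = g.

Definition jointly_epic {I : Type} {X Y : C} (h : I -> Hom X Y) : Prop :=
  forall (Z : C) (f g : Hom Y Z), (forall i, comp f (h i) = comp g (h i)) -> f = g.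

Lemma jointly_epic_compr {I : Type} {W X Y : C} (h : I -> Hom X Y) (e : Hom W X) :
  epic e -> jointly_epic h -> jointly_epic (fun i => comp (h i) e).
Proof.
  intros He Hh Z f g Hfg. apply Hh. intro i. apply He.
  rewrite <- !comp_assoc. apply Hfg.
Qed.

Lemma jointly_epic_transport {I : Type} (X' Y' X Y : C) (pX : X' = X) (pY : Y' = Y)
    (k : I -> Hom X' Y') (h : I -> Hom X Y) :
  (forall i, existT (fun p : C * C => Hom (fst p) (snd p)) (X', Y') (k i)
             = existT (fun p : C * C => Hom (fst p) (snd p)) (X, Y) (h i)) ->
  jointly_epic h -> jointly_epic k.
Proof.
  subst. intros Ekh Hh Z f g Hfg. apply Hh. intro i.
  rewrite <- (inj_pair2 _ _ _ _ _ (Ekh i)). apply Hfg.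
Qed.

End Epimorphisms.

Section Automorphisms.

Context {C : Category}.

Lemma Emap_inj (G F : Endofunctor C) : inverse_left G F ->
  forall (A B : C) (f g : Hom A B), Emap F f = Emap F g -> f = g.
Proof.
  intros [_ HGF] A B f g Efg.
  pose proof (HGF A B f) as Ef. pose proof (HGF A B g) as Eg.
  rewrite Efg in Ef. rewrite Ef in Eg.
  exact (inj_pair2 _ _ _ _ _ Eg).
Qed.

Lemma Emap_jointly_epic (F : Endofunctor C) : automorphism F ->
  forall (I : Type) (X Y : C) (h : I -> Hom X Y),
  jointly_epic h -> jointly_epic (fun i => Emap F (h i)).
Proof.
  intros [G [HGF HFG]] I X Y h Hh Z f g Hfg.
  apply (Emap_inj F G HFG).
  assert (HGFh : jointly_epic (fun i => Emap G (Emap F (h i)))).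
  { apply (jointly_epic_transport _ _ X Y (proj1 HGF X) (proj1 HGF Y) _ h).
    - intro i. apply (proj2 HGF).
    - exact Hh. }
  apply HGFh. intro i. rewrite <- !Emap_comp, Hfg. reflexivity.
Qed.

End Automorphisms.

Section SetFunctors.

Context {C : Category} (Q : SetFunctor C).

Definition separating {X : C} (x : Q X) : Prop :=
  forall (Y : C) (f g : Hom X Y), Fmap Q f x = Fmap Q g x -> f = g.

Hypothesis Q_faithful : faithful Q.

Lemma surjective_epic {X Y : C} (e : Hom X Y) :
  (forall y : Q Y, exists x : Q X, Fmap Q e x = y) -> epic e.
Proof.
  intros He Z f g Hfg. apply Q_faithful. intro y.
  destruct (He y) as [x <-]. rewrite <- !Fmap_comp, Hfg. reflexivity.
Qed.

Lemma covering_jointly_epic {I : Type} {X Y : C} (h : I -> Hom X Y) (x : Q X) :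
  (forall y : Q Y, exists i, Fmap Q (h i) x = y) -> jointly_epic h.
Proof.
  intros Hh Z f g Hfg. apply Q_faithful. intro y.
  destruct (Hh y) as [i <-]. rewrite <- !Fmap_comp, Hfg. reflexivity.
Qed.

End SetFunctors.

Section Representing.

Context {C : Category} (Q : SetFunctor C) (A0 : C) (x0 : Q A0).
Hypothesis H1Q : cond1Q Q A0 x0.

Definition rep {A : C} (a : Q A) : Hom A0 A :=
  proj1_sig (constructive_indefinite_description _ (H1Q A a)).

Lemma Fmap_rep (A : C) (a : Q A) : Fmap Q (rep a) x0 = a.
Proof.
  unfold rep. exact (proj1 (proj2_sig (constructive_indefinite_description _ (H1Q A a)))).
Qed.

Lemma rep_unique (A : C) (a : Q A) (r : Hom A0 A) : Fmap Q r x0 = a -> r = rep a.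
Proof.
  unfold rep. apply (proj2 (proj2_sig (constructive_indefinite_description _ (H1Q A a)))).
Qed.

Lemma rep_natural (A B : C) (mu : Hom A B) (a : Q A) :
  rep (Fmap Q mu a) = comp mu (rep a).
Proof.
  symmetry. apply rep_unique. rewrite Fmap_comp, Fmap_rep. reflexivity.
Qed.

Lemma cond1Q_separating : separating Q x0.
Proof.
  intros Y f g Hfg. rewrite (rep_unique Y _ f eq_refl).
  symmetry. apply rep_unique. symmetry. exact Hfg.
Qed.

Hypothesis Q_faithful : faithful Q.

Lemma rep_jointly_epic (A : C) : jointly_epic (fun a : Q A => rep a).
Proof.
  apply (covering_jointly_epic Q Q_faithful _ x0).
  intro a. exists a. apply Fmap_rep.
Qed.

Section QuasiInner.

Variables (Phi : Endofunctor C) (B : C) (gam : Hom B A0) (z0 : Q (Eob Phi B)).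
Hypotheses (HPhi : automorphism Phi) (gam_epic : epic gam) (z0_separating : separating Q z0).

Definition quasi_inner_map (A : C) (a : Q A) : Q (Eob Phi A) :=
  Fmap Q (Emap Phi (comp (rep a) gam)) z0.

Lemma quasi_inner_map_inj (A : C) (a a' : Q A) :
  quasi_inner_map A a = quasi_inner_map A a' -> a = a'.
Proof.
  intro Haa'. destruct HPhi as [G [HGPhi _]].
  apply z0_separating, (Emap_inj G Phi HGPhi), gam_epic in Haa'.
  rewrite <- (Fmap_rep A a), <- (Fmap_rep A a'), Haa'. reflexivity.
Qed.

Lemma quasi_inner_map_C_bijection (A : C) :
  C_bijection Q A (Eob Phi A) (quasi_inner_map A).
Proof.
  split.
  - apply quasi_inner_map_inj.
  - intros D f g Hfg.
    apply (Emap_jointly_epic Phi HPhi (Q A) B A (fun a => comp (rep a) gam)).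
    + apply jointly_epic_compr; [exact gam_epic | apply rep_jointly_epic].
    + intro a. apply z0_separating. rewrite !Fmap_comp. apply Hfg.
Qed.

Lemma quasi_inner_map_natural (A A' : C) (mu : Hom A A') (a : Q A) :
  Fmap Q (Emap Phi mu) (quasi_inner_map A a) = quasi_inner_map A' (Fmap Q mu a).
Proof.
  unfold quasi_inner_map.
  rewrite <- Fmap_comp, <- Emap_comp, rep_natural, comp_assoc. reflexivity.
Qed.

Lemma potentially_quasi_inner_of_separating_epic : potentially_quasi_inner Q Phi.
Proof.
  exists quasi_inner_map. split.
  - apply quasi_inner_map_C_bijection.
  - apply quasi_inner_map_natural.
Qed.

End QuasiInner.

End Representing.

Theorem theorem1 (C : Category) (Q : SetFunctor C) :
  faithful Q ->
  (exists (A0 : C) (x0 : Q A0), cond1Q Q A0 x0 /\ cond2Q Q A0) ->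
  forall Phi : Endofunctor C, automorphism Phi -> potentially_quasi_inner Q Phi.
Proof.
  intros HQ [A0 [x0 [H1Q H2Q]]] Phi HPhi.
  pose proof HPhi as [G [_ HPhiG]].
  destruct (H2Q (Eob G A0)) as [gam gam_surj].
  assert (Hz0 : exists z0 : Q (Eob Phi (Eob G A0)), separating Q z0).
  { rewrite (proj1 HPhiG A0). exists x0. apply cond1Q_separating, H1Q. }
  destruct Hz0 as [z0 z0_separating].
  exact (potentially_quasi_inner_of_separating_epic Q A0 x0 H1Q HQ Phi _ gam z0 HPhi
           (surjective_epic Q HQ gam gam_surj) z0_separating).
Qed.
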